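(* $\mathsf{C}_{2^\mathbb{N}}\equiv_{sW}\overline{\mathsf{C}_{2^\mathbb{N}}}\equiv_{sW}\mathsf{T}\mathsf{C}_{2^\mathbb{N}}$.
   Context: A problem $f:\subseteq X\rightrightarrows Y$ between represented spaces (sets with surjective partial maps $\delta:\subseteq\mathbb{N}^\mathbb{N}\to X$) is a partial multi-valued map; $F\vdash f$ means $\delta_YF(p)\in f(\delta_X(p))$ whenever $\delta_X(p)\in\mathrm{dom}(f)$; $f\le_{sW}g$ iff there are computable $H,K$ with $HGK\vdash f$ for all $G\vdash g$. $2^\mathbb{N}$ is Cantor space as a computable metric space; $\mathcal A_-(2^\mathbb N)$ is the space of closed subsets represented by $p\mapsto2^\mathbb N\setminus\bigcup_nB_{p(n)}$ for a standard enumeration $(B_n)$ of basic open balls (including the empty ball). $\mathsf C_{2^\mathbb N}:\subseteq\mathcal A_-(2^\mathbb N)\rightrightarrows2^\mathbb N$, $A\mapsto A$, is defined on nonempty $A$. For $p\in\mathbb{N}^\mathbb{N}$, $p-1$ is the concatenation of $p(0)-1,p(1)-1,\dots$ with $0-1$ the empty word; the completion of $(X,\delta_X)$ is $\overline X=X\cup\{\bot\}$ with $\delta_{\overline X}(p)=\delta_X(p-1)$ if $p-1$ is an infinite sequence in $\mathrm{dom}(\delta_X)$ and $\bot$ otherwise. For $f:\subseteq X\rightrightarrows Y$: $\overline f:\overline X\rightrightarrows\overline Y$ equals $f$ on $\mathrm{dom}(f)$ and $\overline Y$ elsewhere; $\mathsf Tf:X\rightrightarrows Y$ equals $f$ on $\mathrm{dom}(f)$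 and $Y$ elsewhere. *)

From Stdlib Require Import Arith List PArith.
Import ListNotations.

Definition Baire := nat -> nat.

Inductive code : Type :=
| Zero : code
| Succ : code
| Proj : nat -> code
| Comp : code -> list code -> code
| Prim : code -> code -> code
| Mu   : code -> code.

Inductive eval : code -> list nat -> nat -> Prop :=
| eZero xs : eval Zero xs 0
| eSucc x xs : eval Succ (x :: xs) (S x)
| eProj i xs : i < length xs -> eval (Proj i) xs (nth i xs 0)
| eComp f gs xs ys y : evals gs xs ys -> eval f ys y -> eval (Comp f gs) xs y
| ePrim0 f g xs y : eval f xs y -> eval (Prim f g) (0 :: xs) y
| ePrimS f g n xs r y :
    eval (Prim f g) (n :: xs) r -> eval g (n :: r :: xs) y ->
    eval (Prim f g) (S n :: xs) y
| eMu f xs n :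
    eval f (n :: xs) 0 ->
    (forall m, m < n -> exists k, eval f (m :: xs) (S k)) ->
    eval (Mu f) xs n
with evals : list code -> list nat -> list nat -> Prop :=
| esNil xs : evals nil xs nil
| esCons g gs xs y ys : eval g xs y -> evals gs xs ys -> evals (g :: gs) xs (y :: ys).

Definition computable_nat (h : nat -> nat) : Prop :=
  exists c, forall n, eval c [n] (h n).

Definition cpair (a b : nat) : nat := (a + b) * (a + b + 1) / 2 + b.
Fixpoint code_word (w : list nat) : nat :=
  match w with nil => 0 | a :: w' => S (cpair a (code_word w')) end.
Fixpoint prefix (p : Baire) (k : nat) : list nat :=
  match k with 0 => nil | S k' => prefix p k' ++ [p k'] end.

(** Partial function Baire -> Baire computed by a (total computable) "machine"
    h : h <n, p|k> is 0 ("no output yet") or (F(p)(n) + 1). *)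
Definition machine_fun (h : nat -> nat) (p q : Baire) : Prop :=
  forall n, (exists k, h (cpair n (code_word (prefix p k))) = S (q n)) /\
            (forall k, h (cpair n (code_word (prefix p k))) = 0 \/
                       h (cpair n (code_word (prefix p k))) = S (q n)).

Definition computable_pfun (F : Baire -> Baire -> Prop) : Prop :=
  exists h, computable_nat h /\ forall p q, F p q <-> machine_fun h p q.

Definition functional (G : Baire -> Baire -> Prop) : Prop :=
  forall p q1 q2, G p q1 -> G p q2 -> q1 = q2.

Record rep : Type := Rep { carrier : Type; delta : Baire -> carrier -> Prop }.

Definition problem (X Y : rep) := carrier X -> carrier Y -> Prop.
Definition pdom {X Y : rep} (f : problem X Y) (x : carrier X) : Prop :=
  exists y, f x y.

Definition realizes {X Y : rep} (F : Baire -> Baire -> Prop) (f : problem X Y) : Prop :=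
  forall p x, delta X p x -> pdom f x ->
    exists q, F p q /\ exists y, delta Y q y /\ f x y.

Definition compose3 (H G K : Baire -> Baire -> Prop) (p r : Baire) : Prop :=
  exists q s, K p q /\ G q s /\ H s r.

Definition sW_le {X Y X' Y' : rep} (f : problem X Y) (g : problem X' Y') : Prop :=
  exists H K, computable_pfun H /\ computable_pfun K /\
    forall G, functional G -> realizes G g -> realizes (compose3 H G K) f.

Definition sW_equiv {X Y X' Y' : rep} (f : problem X Y) (g : problem X' Y') : Prop :=
  sW_le f g /\ sW_le g f.

Definition cantor_rep : rep :=
  Rep (nat -> bool) (fun p x => forall n, p n = if x n then 1 else 0).

(** enumeration of finite binary words: m ↦ binary expansion of m+1 without
    the leading 1 (a bijection nat -> list bool) *)
Fixpoint pos_bits (q : positive) : list bool :=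
  match q with
  | xH => nil
  | xO q' => pos_bits q' ++ [false]
  | xI q' => pos_bits q' ++ [true]
  end.
Definition word_of_nat (m : nat) : list bool := pos_bits (Pos.of_succ_nat m).

Definition is_prefix_of (w : list bool) (x : nat -> bool) : Prop :=
  forall i, i < length w -> nth i w false = x i.

(** basic open balls of Cantor space: B_0 = empty ball, B_{m+1} = cylinder [word m] *)
Definition in_ball (n : nat) (x : nat -> bool) : Prop :=
  match n with 0 => False | S m => is_prefix_of (word_of_nat m) x end.

Definition closed_rep : rep :=
  Rep ((nat -> bool) -> Prop)
      (fun p A => forall x, A x <-> ~ (exists n, in_ball (p n) x)).

Definition C2N : problem closed_rep cantor_rep := fun A x => A x.

Fixpoint cnt_nz (p : Baire) (k : nat) : nat :=
  match k with
  | 0 => 0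
  | S k' => cnt_nz p k' + (if Nat.eqb (p k') 0 then 0 else 1)
  end.

(** q is p-1 and p-1 is infinite *)
Definition minus1 (p q : Baire) : Prop :=
  forall n, exists k, p k <> 0 /\ cnt_nz p k = n /\ q n = p k - 1.

Definition completion (X : rep) : rep :=
  Rep (option (carrier X))
      (fun p u => match u with
                  | Some x => exists q, minus1 p q /\ delta X q x
                  | None => ~ (exists q x, minus1 p q /\ delta X q x)
                  end).

Definition pbar {X Y : rep} (f : problem X Y) : problem (completion X) (completion Y) :=
  fun u v => match u with
             | Some x => pdom f x -> exists y, v = Some y /\ f x y
             | None => True
             end.

Definition ptot {X Y : rep} (f : problem X Y) : problem X Y :=
  fun x y => pdom f x -> f x y.

From Stdlib Require Import Arith List Lia PArith Classical ClassicalEpsilon ConstructiveEpsilon.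
Import ListNotations.

(* [C2N <= pbar C2N]: shifting a name up by one names the same set in the
   completion, and an answer is decoded by deleting zeros and subtracting one.
   For the other reductions a name [b] of a closed set is trimmed: the ball [b i]
   is replaced by the empty ball as soon as [b 0, ..., b i] cover Cantor space.
   This is decidable, since finitely many cylinders cover iff they cover every
   word of a length exceeding their depths.  The trimmed set is never empty (if
   no finite stage covers, König's lemma yields a point outside all balls) and
   equals the original set whenever that one is nonempty.  So a solution of the
   trimmed instance of [C2N] or [ptot C2N] answers [pbar C2N], and a solution of
   the trimmed instance of [pbar C2N] answers [ptot C2N]. *)

(** * Total recursive functions *)

Definition Rec (k : nat) (F : list nat -> nat) : Prop :=
  exists c, forall l, length l = k -> eval c l (F l).

Create HintDb rec.

Lemma rec_ext k F G : (forall l, length l = k -> F l = G l) -> Rec k F -> Rec k G.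
Proof. intros E [c Hc]; exists c; intros l Hl; rewrite <- E by exact Hl; auto. Qed.

Lemma rec_proj k i : i < k -> Rec k (fun l => nth i l 0).
Proof. intros H; exists (Proj i); intros l Hl; constructor; lia. Qed.

Lemma rec_nth_tl k j T : Rec k (fun l => nth (S j) (T l) 0) -> Rec k (fun l => nth j (tl (T l)) 0).
Proof. apply rec_ext; intros l _; now destruct (T l), j. Qed.

Lemma rec_hd k T : Rec k (fun l => nth 0 (T l) 0) -> Rec k (fun l => hd 0 (T l)).
Proof. apply rec_ext; intros l _; destruct (T l); reflexivity. Qed.

Lemma rec_zero k : Rec k (fun _ => 0).
Proof. exists Zero; intros; constructor. Qed.

Lemma rec_succ k A : Rec k A -> Rec k (fun l => S (A l)).
Proof.
  intros [c Hc]; exists (Comp Succ [c]); intros l Hl.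
  econstructor; [constructor; [apply Hc; auto | constructor] | constructor].
Qed.

Lemma rec_const k c : Rec k (fun _ => c).
Proof. induction c; [apply rec_zero | apply (rec_succ k (fun _ => c)); auto]. Qed.

Lemma rec_comp k fs H : Forall (Rec k) fs -> Rec (length fs) H ->
  Rec k (fun l => H (map (fun f => f l) fs)).
Proof.
  intros HF [ch Hh].
  assert (exists cs, forall l, length l = k -> evals cs l (map (fun f => f l) fs)) as [cs Hcs].
  { clear Hh. induction HF as [|f fs [c Hc] _ [cs Hcs]].
    - exists []; intros; constructor.
    - exists (c :: cs); intros l Hl; constructor; auto. }
  exists (Comp ch cs); intros l Hl; econstructor; eauto.
  apply Hh. rewrite length_map; auto.
Qed.

Fixpoint prec (F G : list nat -> nat) (n : nat) (ys : list nat) : nat :=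
  match n with 0 => F ys | S n' => G (n' :: prec F G n' ys :: ys) end.

Lemma rec_prim k F G : Rec k F -> Rec (S (S k)) G ->
  Rec (S k) (fun l => prec F G (hd 0 l) (tl l)).
Proof.
  intros [cf Hf] [cg Hg]; exists (Prim cf cg); intros [|n ys] Hl; [discriminate|].
  injection Hl as Hl. induction n; simpl.
  - constructor; auto.
  - econstructor; eauto. apply Hg. simpl; auto.
Qed.

Lemma rec_op1 f k A : Rec 1 (fun l => f (nth 0 l 0)) -> Rec k A -> Rec k (fun l => f (A l)).
Proof. intros Hf HA. exact (rec_comp k [A] _ (Forall_cons _ HA (Forall_nil _)) Hf). Qed.

Lemma rec_op2 f k A B : Rec 2 (fun l => f (nth 0 l 0) (nth 1 l 0)) ->
  Rec k A -> Rec k B -> Rec k (fun l => f (A l) (B l)).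
Proof. intros Hf HA HB. exact (rec_comp k [A; B] _ ltac:(repeat constructor; auto) Hf). Qed.

Lemma rec_op3 f k A B C : Rec 3 (fun l => f (nth 0 l 0) (nth 1 l 0) (nth 2 l 0)) ->
  Rec k A -> Rec k B -> Rec k C -> Rec k (fun l => f (A l) (B l) (C l)).
Proof. intros Hf HA HB HC. exact (rec_comp k [A; B; C] _ ltac:(repeat constructor; auto) Hf). Qed.

Lemma rec_iter f (base : nat -> nat) (step : nat -> nat -> nat -> nat) :
  (forall y, f 0 y = base y) -> (forall n y, f (S n) y = step n (f n y) y) ->
  Rec 1 (fun l => base (nth 0 l 0)) ->
  Rec 3 (fun l => step (nth 0 l 0) (nth 1 l 0) (nth 2 l 0)) ->
  Rec 2 (fun l => f (nth 0 l 0) (nth 1 l 0)).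
Proof.
  intros H0 HS Hb Hs.
  eapply rec_ext; [|exact (rec_prim 1 (fun l => base (nth 0 l 0)) _ Hb Hs)].
  intros [|n [|y []]] Hl; try discriminate. cbn [hd tl nth].
  induction n; simpl; [auto | rewrite HS, <- IHn; reflexivity].
Qed.

Lemma rec_iter1 f (base : nat) (step : nat -> nat -> nat) :
  f 0 = base -> (forall n, f (S n) = step n (f n)) ->
  Rec 2 (fun l => step (nth 0 l 0) (nth 1 l 0)) -> Rec 1 (fun l => f (nth 0 l 0)).
Proof.
  intros H0 HS Hs.
  apply (rec_op2 (fun n _ => f n) 1 (fun l => nth 0 l 0) (fun _ => 0));
    [|apply rec_proj; lia | apply rec_zero].
  apply (rec_iter (fun n _ => f n) (fun _ => base) (fun n r _ => step n r));
    auto using rec_const.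
  exact (rec_op2 step 3 _ _ Hs (rec_proj 3 0 ltac:(lia)) (rec_proj 3 1 ltac:(lia))).
Qed.

Lemma rec_add2 : Rec 2 (fun l => nth 0 l 0 + nth 1 l 0).
Proof.
  apply (rec_iter Nat.add (fun y => y) (fun _ r _ => S r)); auto.
  - apply rec_proj; lia.
  - apply rec_succ, rec_proj; lia.
Qed.

Lemma rec_mul2 : Rec 2 (fun l => nth 0 l 0 * nth 1 l 0).
Proof.
  apply (rec_iter Nat.mul (fun _ => 0) (fun _ r y => y + r)); auto using rec_zero.
  apply (rec_op2 Nat.add); [exact rec_add2 | apply rec_proj; lia ..].
Qed.

Lemma rec_pred1 : Rec 1 (fun l => pred (nth 0 l 0)).
Proof. apply (rec_iter1 pred 0 (fun n _ => n)); auto. apply rec_proj; lia. Qed.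

Lemma rec_sub2 : Rec 2 (fun l => nth 0 l 0 - nth 1 l 0).
Proof.
  apply (rec_op2 (fun y x => x - y) 2 (fun l => nth 1 l 0) (fun l => nth 0 l 0));
    [|apply rec_proj; lia ..].
  apply (rec_iter (fun y x => x - y) (fun x => x) (fun _ r _ => pred r)).
  - intros; apply Nat.sub_0_r.
  - intros; lia.
  - apply rec_proj; lia.
  - apply (rec_op1 pred); [exact rec_pred1 | apply rec_proj; lia].
Qed.

Lemma rec_ifz3 : Rec 3 (fun l => if nth 0 l 0 =? 0 then nth 1 l 0 else nth 2 l 0).
Proof.
  eapply rec_ext;
    [|apply (rec_prim 2 (fun l => nth 0 l 0) (fun l => nth 3 l 0)); apply rec_proj; lia].
  intros [|[] [|x [|y []]]] Hl; try discriminate; reflexivity.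
Qed.

Lemma rec_plus k A B : Rec k A -> Rec k B -> Rec k (fun l => A l + B l).
Proof. apply (rec_op2 Nat.add), rec_add2. Qed.

Lemma rec_times k A B : Rec k A -> Rec k B -> Rec k (fun l => A l * B l).
Proof. apply (rec_op2 Nat.mul), rec_mul2. Qed.

Lemma rec_minus k A B : Rec k A -> Rec k B -> Rec k (fun l => A l - B l).
Proof. apply (rec_op2 Nat.sub), rec_sub2. Qed.

Lemma rec_ifz k Z X Y : Rec k Z -> Rec k X -> Rec k Y ->
  Rec k (fun l => if Z l =? 0 then X l else Y l).
Proof. apply (rec_op3 (fun z x y => if z =? 0 then x else y)), rec_ifz3. Qed.

Lemma rec_ifeq k A B X Y : Rec k A -> Rec k B -> Rec k X -> Rec k Y ->
  Rec k (fun l => if A l =? B l then X l else Y l).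
Proof.
  intros HA HB HX HY.
  eapply rec_ext; [|apply (rec_ifz k (fun l => (A l - B l) + (B l - A l)) X Y);
                    auto using rec_plus, rec_minus].
  intros l _; cbv beta.
  destruct (Nat.eqb_spec (A l - B l + (B l - A l)) 0), (Nat.eqb_spec (A l) (B l));
    try reflexivity; lia.
Qed.

Lemma rec_ifle k A B X Y : Rec k A -> Rec k B -> Rec k X -> Rec k Y ->
  Rec k (fun l => if A l <=? B l then X l else Y l).
Proof.
  intros HA HB HX HY.
  eapply rec_ext; [|apply (rec_ifz k (fun l => A l - B l) X Y); auto using rec_minus].
  intros l _; cbv beta.
  destruct (Nat.eqb_spec (A l - B l) 0), (Nat.leb_spec (A l) (B l)); try reflexivity; lia.
Qed.

Lemma rec_iflt k A B X Y : Rec k A -> Rec k B -> Rec k X -> Rec k Y ->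
  Rec k (fun l => if A l <? B l then X l else Y l).
Proof.
  intros HA HB HX HY.
  eapply rec_ext; [|apply (rec_ifz k (fun l => B l - A l) Y X); auto using rec_minus].
  intros l _; cbv beta.
  destruct (Nat.eqb_spec (B l - A l) 0), (Nat.ltb_spec (A l) (B l)); try reflexivity; lia.
Qed.

Fixpoint bsum (f : nat -> nat) (n : nat) : nat :=
  match n with 0 => 0 | S n' => bsum f n' + f n' end.

Lemma map_nth_seq (l : list nat) k s :
  length l = s + k -> map (fun i => nth i l 0) (seq s k) = skipn s l.
Proof.
  revert l s; induction k; intros l s Hl; simpl.
  - rewrite skipn_all2; auto; lia.
  - rewrite IHk by lia.
    assert (Hs : s < length l) by lia.
    clear IHk Hl. revert l Hs; induction s; intros [|a l] Hs; simpl in *; try lia; auto.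
    apply IHs; lia.
Qed.

Lemma rec_projs n s k : s + k <= n -> Forall (Rec n) (map (fun i l => nth i l 0) (seq s k)).
Proof.
  intros H. apply Forall_forall. intros f Hf.
  apply in_map_iff in Hf as [i [<- Hi]]. apply in_seq in Hi. apply rec_proj; lia.
Qed.

Lemma rec_skipn k s F A : Rec (S k) F -> Rec (s + k) A ->
  Rec (s + k) (fun l => F (A l :: skipn s l)).
Proof.
  intros HF HA.
  eapply rec_ext; [|apply (rec_comp (s + k) (A :: map (fun i l => nth i l 0) (seq s k)) F)].
  - intros l Hl. cbn [map]. rewrite map_map, map_nth_seq by lia. reflexivity.
  - constructor; auto using rec_projs.
  - simpl. rewrite length_map, length_seq. exact HF.
Qed.

Lemma rec_tl k A : Rec k A -> Rec (S k) (fun l => A (tl l)).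
Proof.
  intros HA.
  eapply rec_ext; [|apply (rec_comp (S k) (map (fun i l => nth i l 0) (seq 1 k)) A)].
  - intros l Hl. cbv beta. rewrite map_map, (map_nth_seq l k 1) by lia. reflexivity.
  - apply rec_projs; lia.
  - rewrite length_map, length_seq. exact HA.
Qed.

Lemma rec_bsum k (F : nat -> list nat -> nat) B :
  Rec (S k) (fun l => F (hd 0 l) (tl l)) -> Rec k B ->
  Rec k (fun l => bsum (fun i => F i l) (B l)).
Proof.
  intros HF HB.
  set (G := fun l : list nat => nth 1 l 0 + F (nth 0 l 0) (skipn 2 l)).
  assert (HG : Rec (2 + k) G).
  { apply rec_plus; [apply rec_proj; lia|].
    apply (rec_skipn k 2 _ (fun l => nth 0 l 0) HF). apply rec_proj; lia. }
  eapply rec_ext; [|exact (rec_skipn k 0 _ B (rec_prim k (fun _ => 0) G (rec_zero k) HG) HB)].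
  intros l _. cbn [hd tl skipn]. induction (B l); simpl; auto.
  rewrite IHn. reflexivity.
Qed.

#[local] Hint Resolve rec_const rec_succ rec_plus rec_times rec_minus
  rec_ifeq rec_ifle rec_iflt rec_nth_tl rec_hd rec_tl rec_bsum : rec.
#[local] Hint Extern 1 (Rec _ (fun l => nth _ l 0)) => apply rec_proj; simpl; lia : rec.

Ltac rec_auto := solve [auto 40 with rec].

(** * Bounded sums and decoding *)

Lemma bsum_ext f g n : (forall i, i < n -> f i = g i) -> bsum f n = bsum g n.
Proof. induction n; simpl; intros H; auto. rewrite IHn, H; auto. Qed.

Lemma bsum_indicator_lt s n : bsum (fun i => if i <? s then 1 else 0) n = Nat.min s n.
Proof. induction n; simpl; [lia|]. rewrite IHn. destruct (Nat.ltb_spec n s); lia. Qed.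

Lemma bsum_eq0 f n : bsum f n = 0 <-> forall i, i < n -> f i = 0.
Proof.
  induction n; simpl; split; intros H.
  - intros; lia.
  - auto.
  - intros i Hi. destruct (Nat.eq_dec i n); [subst; lia|]. apply IHn; lia.
  - rewrite (proj2 IHn) by (intros; apply H; lia). rewrite H by lia. reflexivity.
Qed.

Lemma bsum_single f j n : (forall i, i <> j -> f i = 0) ->
  bsum f n = if j <? n then f j else 0.
Proof.
  intros H. induction n; simpl; auto. rewrite IHn.
  destruct (Nat.ltb_spec j n), (Nat.ltb_spec j (S n)); try lia.
  - rewrite (H n) by lia. lia.
  - replace n with j by lia. lia.
  - rewrite (H n) by lia. reflexivity.
Qed.

Lemma le_bsum f n i : i < n -> f i <= bsum f n.
Proof.
  induction n; simpl; intros Hi; [lia|].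
  destruct (Nat.eq_dec i n); [subst; lia | specialize (IHn ltac:(lia)); lia].
Qed.

Lemma bsum_neq0 f n : bsum f n <> 0 -> exists i, i < n /\ f i <> 0.
Proof.
  induction n; simpl; intros H; [lia|].
  destruct (Nat.eq_dec (f n) 0) as [E|E]; [|exists n; auto].
  destruct IHn as [i Hi]; [lia|]. exists i. split; [lia | tauto].
Qed.

Lemma bsum_pos f n i : i < n -> f i <> 0 -> bsum f n <> 0.
Proof. intros Hi Hf. pose proof (le_bsum f n i Hi). lia. Qed.

Definition bdiv a b := bsum (fun q => if S q * b <=? a then 1 else 0) a.

Lemma bdiv_spec a b : b <> 0 -> bdiv a b = a / b.
Proof.
  intros Hb. unfold bdiv.
  rewrite (bsum_ext _ (fun i => if i <? a / b then 1 else 0)).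
  - rewrite bsum_indicator_lt. assert (a / b <= a) by (apply Nat.Div0.div_le_upper_bound; nia). lia.
  - intros i _. destruct (Nat.leb_spec (S i * b) a), (Nat.ltb_spec i (a / b)); auto.
    + exfalso. assert (S i <= a / b) by (apply Nat.div_le_lower_bound; nia). lia.
    + exfalso. assert (b * (a / b) <= a) by (apply Nat.Div0.mul_div_le). nia.
Qed.

Lemma rec_bdiv k A B : Rec k A -> Rec k B -> Rec k (fun l => bdiv (A l) (B l)).
Proof. apply (rec_op2 bdiv). unfold bdiv. rec_auto. Qed.

Lemma rec_pow2 k A : Rec k A -> Rec k (fun l => 2 ^ A l).
Proof.
  apply (rec_op1 (fun n => 2 ^ n)).
  apply (rec_iter1 (fun n => 2 ^ n) 1 (fun _ r => r + r)); [auto | intros; simpl; lia | rec_auto].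
Qed.

#[local] Hint Resolve rec_bdiv rec_pow2 : rec.

Definition tri (s : nat) : nat := bsum S s.

Lemma tri_double s : 2 * tri s = s * (s + 1).
Proof. induction s; unfold tri in *; simpl in *; lia. Qed.

Lemma tri_mono a b : a <= b -> tri a <= tri b.
Proof. induction 1; unfold tri in *; simpl; lia. Qed.

Lemma le_tri s : s <= tri s.
Proof. induction s; unfold tri in *; simpl; lia. Qed.

Lemma cpair_tri a b : cpair a b = tri (a + b) + b.
Proof.
  unfold cpair. f_equal. rewrite <- tri_double, Nat.mul_comm. apply Nat.div_mul. lia.
Qed.

(* the diagonal [a + b] of [cpair a b] is the number of [s < m] with [tri (S s) <= m] *)
Definition unpair_diag m := bsum (fun s => if tri (S s) <=? m then 1 else 0) m.
Definition unpair2 m := m - tri (unpair_diag m).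
Definition unpair1 m := unpair_diag m - unpair2 m.

Lemma unpair_diag_cpair a b : unpair_diag (cpair a b) = a + b.
Proof.
  rewrite cpair_tri. unfold unpair_diag.
  rewrite (bsum_ext _ (fun i => if i <? a + b then 1 else 0)).
  - rewrite bsum_indicator_lt. pose proof (le_tri (a + b)). lia.
  - intros i _.
    destruct (Nat.leb_spec (tri (S i)) (tri (a + b) + b)), (Nat.ltb_spec i (a + b)); auto.
    + exfalso. assert (tri (S (a + b)) <= tri (S i)) by (apply tri_mono; lia).
      unfold tri in *; simpl in *. lia.
    + exfalso. assert (tri (S i) <= tri (a + b)) by (apply tri_mono; lia). lia.
Qed.

Lemma unpair2_cpair a b : unpair2 (cpair a b) = b.
Proof. unfold unpair2. rewrite unpair_diag_cpair, cpair_tri. lia. Qed.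

Lemma unpair1_cpair a b : unpair1 (cpair a b) = a.
Proof. unfold unpair1. rewrite unpair_diag_cpair, unpair2_cpair. lia. Qed.

Lemma rec_unpair_diag k A : Rec k A -> Rec k (fun l => unpair_diag (A l)).
Proof. apply (rec_op1 unpair_diag). unfold unpair_diag, tri. rec_auto. Qed.
#[local] Hint Resolve rec_unpair_diag : rec.

Lemma rec_unpair2 k A : Rec k A -> Rec k (fun l => unpair2 (A l)).
Proof. intros. unfold unpair2, tri. rec_auto. Qed.
#[local] Hint Resolve rec_unpair2 : rec.

Lemma rec_unpair1 k A : Rec k A -> Rec k (fun l => unpair1 (A l)).
Proof. intros. unfold unpair1. rec_auto. Qed.
#[local] Hint Resolve rec_unpair1 : rec.

Definition word_hd w := unpair1 (w - 1).
Definition word_tl w := unpair2 (w - 1).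
Definition word_drop i w := Nat.iter i word_tl w.
Definition word_nth i w := word_hd (word_drop i w).
Definition word_len w := bsum (fun i => if word_drop i w =? 0 then 0 else 1) w.

Lemma word_hd_code l : word_hd (code_word l) = hd 0 l.
Proof.
  destruct l; [reflexivity|]. unfold word_hd; simpl. rewrite Nat.sub_0_r, unpair1_cpair; auto.
Qed.

Lemma word_tl_code l : word_tl (code_word l) = code_word (tl l).
Proof.
  destruct l; [reflexivity|]. unfold word_tl; simpl. rewrite Nat.sub_0_r, unpair2_cpair; auto.
Qed.

Lemma word_drop_code i l : word_drop i (code_word l) = code_word (skipn i l).
Proof.
  induction i; [reflexivity|]. unfold word_drop in *; simpl.
  rewrite IHi, word_tl_code. f_equal. clear IHi. revert l; induction i; intros [|a l]; auto.
  apply IHi.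
Qed.

Lemma word_nth_code i l : word_nth i (code_word l) = nth i l 0.
Proof.
  unfold word_nth. rewrite word_drop_code, word_hd_code.
  revert l; induction i; intros [|a l]; simpl; auto.
Qed.

Lemma length_le_code_word l : length l <= code_word l.
Proof. induction l; simpl; auto. rewrite cpair_tri. pose proof (le_tri (a + code_word l)). lia. Qed.

Lemma word_len_code l : word_len (code_word l) = length l.
Proof.
  unfold word_len. rewrite (bsum_ext _ (fun i => if i <? length l then 1 else 0)).
  - rewrite bsum_indicator_lt. pose proof (length_le_code_word l). lia.
  - intros i _. rewrite word_drop_code.
    destruct (Nat.ltb_spec i (length l)).
    + destruct (skipn i l) eqn:E; [|reflexivity].
      apply (f_equal (@length nat)) in E. rewrite length_skipn in E. simpl in E. lia.
    + rewrite skipn_all2 by lia. reflexivity.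
Qed.

Lemma rec_word_drop k A B : Rec k A -> Rec k B -> Rec k (fun l => word_drop (A l) (B l)).
Proof.
  apply (rec_op2 word_drop).
  apply (rec_iter word_drop (fun w => w) (fun _ r _ => word_tl r)); auto.
  - rec_auto.
  - unfold word_tl. rec_auto.
Qed.
#[local] Hint Resolve rec_word_drop : rec.

Lemma rec_word_nth k A B : Rec k A -> Rec k B -> Rec k (fun l => word_nth (A l) (B l)).
Proof. intros. unfold word_nth, word_hd. rec_auto. Qed.

Lemma rec_word_len k A : Rec k A -> Rec k (fun l => word_len (A l)).
Proof. intros. unfold word_len. rec_auto. Qed.
#[local] Hint Resolve rec_word_nth rec_word_len : rec.

(** * Binary expansions and cylinders *)

Lemma pos_bits_inj t u : pos_bits t = pos_bits u -> t = u.
Proof.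
  revert u; induction t as [t IH|t IH|]; intros [u|u|]; simpl; intros E; auto.
  all: try (apply app_inj_tail in E as [E1 E2]; try discriminate; f_equal; auto; fail).
  all: try (destruct (pos_bits t); discriminate).
  all: destruct (pos_bits u); discriminate.
Qed.

Lemma pos_bits_bound t :
  2 ^ length (pos_bits t) <= Pos.to_nat t < 2 ^ S (length (pos_bits t)).
Proof.
  induction t as [t IH|t IH|]; simpl; [rewrite Pos2Nat.inj_xI | rewrite Pos2Nat.inj_xO | ];
    rewrite ?length_app; simpl; rewrite ?Nat.add_1_r; simpl in *; lia.
Qed.

Lemma pos_bits_snoc t w c : pos_bits t = w ++ [c] ->
  exists t', pos_bits t' = w /\ Pos.to_nat t / 2 = Pos.to_nat t'.
Proof.
  destruct t as [t|t|]; cbn [pos_bits]; intros E.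
  - apply app_inj_tail in E as [<- _]. exists t. split; auto.
    rewrite Pos2Nat.inj_xI. symmetry; apply Nat.div_unique with 1; lia.
  - apply app_inj_tail in E as [<- _]. exists t. split; auto.
    rewrite Pos2Nat.inj_xO. symmetry; apply Nat.div_unique with 0; lia.
  - destruct w; discriminate.
Qed.

Lemma div_pow2_succ a d : a / 2 ^ S d = a / 2 / 2 ^ d.
Proof. rewrite Nat.pow_succ_r', Nat.Div0.div_div. reflexivity. Qed.

Lemma pos_bits_app_div t u s : pos_bits t = pos_bits u ++ s ->
  Pos.to_nat t / 2 ^ length s = Pos.to_nat u.
Proof.
  revert t; induction s as [|c s IH] using rev_ind; intros t E.
  - rewrite app_nil_r in E. apply pos_bits_inj in E as ->. simpl. apply Nat.div_1_r.
  - rewrite app_assoc in E. apply pos_bits_snoc in E as [t' [E Ht']].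
    rewrite length_app, Nat.add_1_r, div_pow2_succ, Ht'. auto.
Qed.

Lemma div_pow2_pos_bits t u d : Pos.to_nat t / 2 ^ d = Pos.to_nat u ->
  exists s, pos_bits t = pos_bits u ++ s.
Proof.
  revert t; induction d as [|d IH]; intros t E.
  - rewrite Nat.div_1_r in E. apply Pos2Nat.inj in E as ->. exists []. symmetry; apply app_nil_r.
  - rewrite div_pow2_succ in E. destruct t as [t|t|].
    + rewrite Pos2Nat.inj_xI, <- (Nat.div_unique _ 2 (Pos.to_nat t) 1) in E by lia.
      destruct (IH t E) as [s Hs]. exists (s ++ [true]). simpl. rewrite Hs, app_assoc. auto.
    + rewrite Pos2Nat.inj_xO, <- (Nat.div_unique _ 2 (Pos.to_nat t) 0) in E by lia.
      destruct (IH t E) as [s Hs]. exists (s ++ [false]). simpl. rewrite Hs, app_assoc. auto.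
    + simpl in E. rewrite Nat.Div0.div_0_l in E. lia.
Qed.

Definition pos_of_bits (w : list bool) : positive :=
  fold_left (fun t (c : bool) => if c then xI t else xO t) w xH.

Lemma pos_bits_of_bits w : pos_bits (pos_of_bits w) = w.
Proof.
  induction w as [|c w IH] using rev_ind; [reflexivity|].
  unfold pos_of_bits in *. rewrite fold_left_app. destruct c; simpl; rewrite IH; auto.
Qed.

Lemma length_pos_bits_of_nat t D : 2 ^ D <= t < 2 ^ S D -> length (pos_bits (Pos.of_nat t)) = D.
Proof.
  intros Ht. pose proof (pos_bits_bound (Pos.of_nat t)) as Hb.
  rewrite Nat2Pos.id in Hb by (pose proof (Nat.pow_nonzero 2 D); lia).
  set (L := length (pos_bits (Pos.of_nat t))) in *.
  destruct (Nat.lt_trichotomy L D) as [HL|[HL|HL]]; auto; exfalso.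
  - assert (2 ^ S L <= 2 ^ D) by (apply Nat.pow_le_mono_r; lia). simpl in *. lia.
  - assert (2 ^ S D <= 2 ^ L) by (apply Nat.pow_le_mono_r; lia). simpl in *. lia.
Qed.

Lemma length_word_of_nat m : length (word_of_nat m) < S m.
Proof.
  unfold word_of_nat. pose proof (pos_bits_bound (Pos.of_succ_nat m)).
  rewrite SuccNat2Pos.id_succ in H.
  pose proof (Nat.pow_gt_lin_r 2 (length (pos_bits (Pos.of_succ_nat m)))). lia.
Qed.

Lemma is_prefix_of_app w s x : is_prefix_of (w ++ s) x -> is_prefix_of w x.
Proof. intros H i Hi. rewrite <- H by (rewrite length_app; lia). rewrite app_nth1; auto. Qed.

Lemma is_prefix_of_map_seq (x : nat -> bool) D : is_prefix_of (map x (seq 0 D)) x.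
Proof.
  intros i Hi. rewrite length_map, length_seq in Hi.
  rewrite nth_indep with (d' := x 0) by (rewrite length_map, length_seq; auto).
  rewrite map_nth, seq_nth; auto.
Qed.

Lemma is_prefix_of_nth w l : length w <= length l ->
  is_prefix_of w (fun k => nth k l false) -> l = w ++ skipn (length w) l.
Proof.
  revert l; induction w as [|a w IH]; intros [|c l] Hl H; simpl in Hl |- *; try lia; auto.
  f_equal; [symmetry; apply (H 0); simpl; lia|].
  apply IH; [lia | intros i Hi; apply (H (S i)); simpl; lia].
Qed.

(** * Finite covers of Cantor space *)

Definition covers (b : nat -> nat) n := forall x, exists i, i <= n /\ in_ball (b i) x.

Definition avoids (b : nat -> nat) (x : nat -> bool) := forall i, ~ in_ball (b i) x.

Lemma covers_mono b n m : n <= m -> covers b n -> covers b m.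
Proof. intros Hnm H x. destruct (H x) as [i [Hi Hin]]. exists i. split; [lia | auto]. Qed.

(* The binary expansion of [t] (leading 1 dropped) extends the word of the
   ball [b i] iff [t / 2 ^ d = b i] for some [d]; these pairs are counted. *)
Definition ball_hits (b : nat -> nat) n t :=
  bsum (fun i => bsum (fun d =>
    if b i =? 0 then 0 else if bdiv t (2 ^ d) =? b i then 1 else 0) t) (S n).

(* Every ball among [b 0, ..., b n] is given by a word shorter than this. *)
Definition ball_depth (b : nat -> nat) n := bsum b (S n).

(* The number of words of length [ball_depth b n], coded as [2 ^ D + j], that
   extend none of the balls [b 0, ..., b n]. *)
Definition uncovered (b : nat -> nat) n :=
  bsum (fun j => if ball_hits b n (2 ^ ball_depth b n + j) =? 0 then 1 else 0)
       (2 ^ ball_depth b n).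

Lemma ball_hits_neq0 b n t : ball_hits b n t <> 0 <->
  exists i d, i <= n /\ d < t /\ b i <> 0 /\ t / 2 ^ d = b i.
Proof.
  unfold ball_hits. split.
  - intros H. apply bsum_neq0 in H as [i [Hi H]]. apply bsum_neq0 in H as [d [Hd H]].
    rewrite bdiv_spec in H by (apply Nat.pow_nonzero; lia).
    exists i, d. destruct (Nat.eqb_spec (b i) 0), (Nat.eqb_spec (t / 2 ^ d) (b i)); lia.
  - intros [i [d [Hi [Hd [Hb E]]]]].
    apply (bsum_pos _ _ i); [lia|]. apply (bsum_pos _ _ d); [lia|].
    rewrite bdiv_spec by (apply Nat.pow_nonzero; lia).
    destruct (Nat.eqb_spec (b i) 0); [lia|]. rewrite E, Nat.eqb_refl. discriminate.
Qed.

Lemma covers_of_uncovered_eq0 b n : uncovered b n = 0 -> covers b n.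
Proof.
  unfold uncovered. set (D := ball_depth b n). rewrite bsum_eq0. intros H x.
  set (tp := pos_of_bits (map x (seq 0 D))).
  assert (Hbits : pos_bits tp = map x (seq 0 D)) by apply pos_bits_of_bits.
  pose proof (pos_bits_bound tp) as Hb.
  rewrite Hbits, length_map, length_seq in Hb. simpl in Hb.
  specialize (H (Pos.to_nat tp - 2 ^ D) ltac:(lia)).
  replace (2 ^ D + (Pos.to_nat tp - 2 ^ D)) with (Pos.to_nat tp) in H by lia.
  destruct (Nat.eqb_spec (ball_hits b n (Pos.to_nat tp)) 0) as [_|Hhit]; [discriminate|].
  apply ball_hits_neq0 in Hhit as [i [d [Hi [_ [Hbi Hd]]]]].
  exists i. split; auto.
  destruct (b i) as [|m]; [lia|].
  rewrite <- (SuccNat2Pos.id_succ m) in Hd.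
  destruct (div_pow2_pos_bits _ _ _ Hd) as [s Hs].
  apply (is_prefix_of_app _ s). unfold word_of_nat. rewrite <- Hs, Hbits.
  apply is_prefix_of_map_seq.
Qed.

Lemma uncovered_eq0_of_covers b n : covers b n -> uncovered b n = 0.
Proof.
  unfold uncovered. set (D := ball_depth b n).
  assert (HbD : forall i, i <= n -> b i <= D) by (intros i Hi; apply le_bsum; lia).
  pose proof (Nat.pow_gt_lin_r 2 D ltac:(lia)) as HD.
  rewrite bsum_eq0. intros H j Hj.
  set (t := 2 ^ D + j). set (tp := Pos.of_nat t).
  assert (Ht : Pos.to_nat tp = t) by (apply Nat2Pos.id; unfold t; lia).
  assert (Hlen : length (pos_bits tp) = D)
    by (apply length_pos_bits_of_nat; simpl; unfold t; lia).
  destruct (H (fun k => nth k (pos_bits tp) false)) as [i [Hi Hin]].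
  destruct (b i) as [|m] eqn:Ebi; [destruct Hin|].
  assert (Hw : length (word_of_nat m) <= length (pos_bits tp))
    by (pose proof (length_word_of_nat m); pose proof (HbD i Hi); lia).
  set (s := skipn (length (word_of_nat m)) (pos_bits tp)).
  assert (Hdiv : Pos.to_nat tp / 2 ^ length s = S m).
  { rewrite <- (SuccNat2Pos.id_succ m). apply pos_bits_app_div.
    exact (is_prefix_of_nth _ _ Hw Hin). }
  enough (ball_hits b n t <> 0)
    by (destruct (Nat.eqb_spec (ball_hits b n t) 0); [contradiction | reflexivity]).
  apply ball_hits_neq0. exists i, (length s). rewrite Ebi, <- Ht.
  assert (length s <= D) by (unfold s; rewrite length_skipn; lia).
  repeat split; auto; lia.
Qed.

Lemma uncovered_eq0 b n : uncovered b n = 0 <-> covers b n.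
Proof. split; [apply covers_of_uncovered_eq0 | apply uncovered_eq0_of_covers]. Qed.

(** * Trimming a name of a closed set *)

Section Konig.

Variable b : nat -> nat.
Hypothesis no_finite_cover : forall n, ~ covers b n.

Definition extendable (s : list bool) :=
  forall n, exists x, is_prefix_of s x /\ forall i, i <= n -> ~ in_ball (b i) x.

Lemma extendable_nil : extendable [].
Proof.
  intros n. destruct (not_all_ex_not _ _ (no_finite_cover n)) as [x Hx].
  exists x. split; [intros i Hi; simpl in Hi; lia|].
  intros i Hi Hin. apply Hx. eauto.
Qed.

Lemma extendable_snoc s : extendable s -> extendable (s ++ [false]) \/ extendable (s ++ [true]).
Proof.
  intros Hs. apply NNPP. intros Hn. apply not_or_and in Hn as [H0 H1].
  apply not_all_ex_not in H0 as [n0 H0]. apply not_all_ex_not in H1 as [n1 H1].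
  destruct (Hs (Nat.max n0 n1)) as [x [Hpx Hav]].
  assert (Hext : is_prefix_of (s ++ [x (length s)]) x).
  { intros i Hi. rewrite length_app in Hi. simpl in Hi.
    destruct (Nat.eq_dec i (length s)) as [->|].
    - rewrite app_nth2, Nat.sub_diag by lia. reflexivity.
    - rewrite app_nth1 by lia. apply Hpx; lia. }
  destruct (x (length s)); [apply H1 | apply H0]; exists x; split; auto;
    intros i Hi; apply Hav; lia.
Qed.

Fixpoint branch (k : nat) : list bool :=
  match k with
  | 0 => []
  | S k' => if excluded_middle_informative (extendable (branch k' ++ [false]))
            then branch k' ++ [false] else branch k' ++ [true]
  end.

Lemma branch_S k : exists c, branch (S k) = branch k ++ [c].
Proof. simpl. destruct (excluded_middle_informative _); eauto. Qed.

Lemma extendable_branch k : extendable (branch k).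
Proof.
  induction k; simpl; [apply extendable_nil|].
  destruct (excluded_middle_informative _); auto.
  destruct (extendable_snoc _ IHk); auto. contradiction.
Qed.

Lemma length_branch k : length (branch k) = k.
Proof. induction k; auto. destruct (branch_S k) as [c ->]. rewrite length_app, IHk. simpl. lia. Qed.

Lemma nth_branch j k r : j < k -> nth j (branch (r + k)) false = nth j (branch k) false.
Proof.
  intros H. induction r; auto. destruct (branch_S (r + k)) as [c Hc]. simpl plus. rewrite Hc.
  rewrite app_nth1; auto. rewrite length_branch. lia.
Qed.

Definition branch_limit (i : nat) : bool := nth i (branch (S i)) false.

Lemma branch_limit_prefix k : is_prefix_of (branch k) branch_limit.
Proof.
  intros i Hi. rewrite length_branch in Hi. unfold branch_limit.
  replace k with ((k - S i) + S i) by lia. rewrite nth_branch by lia. auto.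
Qed.

Lemma konig : exists x, avoids b x.
Proof.
  exists branch_limit. intros i Hin. destruct (b i) as [|m] eqn:Ebi; [destruct Hin|].
  destruct (extendable_branch (length (word_of_nat m)) i) as [y [Hpy Hav]].
  apply (Hav i); auto. rewrite Ebi. intros k Hk.
  rewrite Hin, <- (branch_limit_prefix (length (word_of_nat m))), Hpy
    by (rewrite ?length_branch; auto).
  reflexivity.
Qed.

End Konig.

(* Ball [i] is replaced by the empty ball once [b 0, ..., b i] cover the
   whole space: the set becomes nonempty and is unchanged if it was nonempty. *)
Definition trim (b : nat -> nat) i := if uncovered b i =? 0 then 0 else b i.

Lemma trim_id b x : avoids b x -> forall i, trim b i = b i.
Proof.
  intros Hx i. unfold trim. destruct (Nat.eqb_spec (uncovered b i) 0) as [E|E]; auto.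
  apply uncovered_eq0 in E. destruct (E x) as [j [_ Hj]]. destruct (Hx j Hj).
Qed.

Lemma avoids_trim b : exists x, avoids (trim b) x.
Proof.
  destruct (classic (exists n, uncovered b n = 0)) as [Hcov|Hnocov].
  - destruct (epsilon_smallest _ (fun n => Nat.eq_dec (uncovered b n) 0) Hcov)
      as [n0 [H0 Hmin]].
    assert (Hdrop : forall j, n0 <= j -> trim b j = 0).
    { intros j Hj. unfold trim. replace (uncovered b j) with 0; auto. symmetry.
      apply uncovered_eq0. apply (covers_mono b n0); auto. apply uncovered_eq0; auto. }
    destruct n0 as [|n1].
    + exists (fun _ => true). intros j. rewrite Hdrop by lia. auto.
    + assert (Hn1 : ~ covers b n1)
        by (rewrite <- uncovered_eq0; intros E; specialize (Hmin _ E); lia).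
      apply not_all_ex_not in Hn1 as [x Hx]. exists x. intros j Hin.
      destruct (Nat.le_gt_cases j n1).
      * unfold trim in Hin. destruct (uncovered b j =? 0); [destruct Hin | apply Hx; eauto].
      * rewrite Hdrop in Hin by lia. destruct Hin.
  - destruct (konig b) as [x Hx].
    + intros n Hn. apply Hnocov. exists n. apply uncovered_eq0; auto.
    + exists x. intros i. rewrite trim_id with (x := x); auto.
Qed.

(** * Machines *)

Lemma length_prefix p k : length (prefix p k) = k.
Proof. induction k; simpl; auto. rewrite length_app, IHk. simpl. lia. Qed.

Lemma nth_prefix p k i : i < k -> nth i (prefix p k) 0 = p i.
Proof.
  induction k; intros H; [lia|]. simpl.
  destruct (Nat.eq_dec i k) as [->|].
  - rewrite app_nth2, length_prefix, Nat.sub_diag; auto. rewrite length_prefix; auto.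
  - rewrite app_nth1 by (rewrite length_prefix; lia). apply IHk; lia.
Qed.

Lemma machine_fun_eventually h p q :
  (forall n, exists k0, forall k,
     h (cpair n (code_word (prefix p k))) = if k0 <=? k then S (q n) else 0) ->
  machine_fun h p q.
Proof.
  intros H n. destruct (H n) as [k0 Hk]. split.
  - exists k0. rewrite Hk, Nat.leb_refl. auto.
  - intros k. rewrite Hk. destruct (k0 <=? k); auto.
Qed.

Lemma computable_machine h : Rec 1 (fun l => h (nth 0 l 0)) -> computable_pfun (machine_fun h).
Proof.
  intros [c Hc]. exists h. split; [|tauto].
  exists c. intros n. apply (Hc [n]). reflexivity.
Qed.

(* Answers query [n] with [F n w] once the word [w] read so far has length [> n]. *)
Definition prefix_machine (F : nat -> nat -> nat) m :=
  if unpair1 m <? word_len (unpair2 m) then S (F (unpair1 m) (unpair2 m)) else 0.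

Lemma prefix_machine_spec F p q :
  (forall n k, n < k -> F n (code_word (prefix p k)) = q n) -> machine_fun (prefix_machine F) p q.
Proof.
  intros HF. apply machine_fun_eventually. intros n. exists (S n). intros k.
  unfold prefix_machine. rewrite unpair1_cpair, unpair2_cpair, word_len_code, length_prefix.
  destruct (Nat.ltb_spec n k), (Nat.leb_spec (S n) k); try lia; auto.
Qed.

Lemma rec_prefix_machine F : Rec 2 (fun l => F (nth 0 l 0) (nth 1 l 0)) ->
  Rec 1 (fun l => prefix_machine F (nth 0 l 0)).
Proof.
  intros HF. unfold prefix_machine.
  apply rec_iflt; [rec_auto | rec_auto | apply rec_succ, (rec_op2 F); auto; rec_auto | rec_auto].
Qed.

Definition succ_machine := prefix_machine (fun n w => S (word_nth n w)).

Lemma succ_machine_spec p : machine_fun succ_machine p (fun n => S (p n)).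
Proof.
  apply prefix_machine_spec. intros n k Hn. rewrite word_nth_code, nth_prefix; auto.
Qed.

Lemma computable_succ_machine : computable_pfun (machine_fun succ_machine).
Proof. apply computable_machine, rec_prefix_machine. rec_auto. Qed.

Definition trim_machine sh e := prefix_machine (fun n w => e + trim (fun i => word_nth i w - sh) n).

Lemma computable_trim_machine sh e : computable_pfun (machine_fun (trim_machine sh e)).
Proof.
  apply computable_machine, rec_prefix_machine.
  unfold trim, uncovered, ball_hits, ball_depth. rec_auto.
Qed.

Lemma trim_ext b b' n : (forall i, i <= n -> b i = b' i) -> trim b n = trim b' n.
Proof.
  intros H.
  assert (Hhits : forall t, ball_hits b n t = ball_hits b' n t)
    by (intros t; apply bsum_ext; intros i Hi; rewrite H by lia; reflexivity).
  assert (Hdepth : ball_depth b n = ball_depth b' n) by (apply bsum_ext; intros i Hi; apply H; lia).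
  unfold trim, uncovered. rewrite Hdepth, H by auto.
  erewrite bsum_ext; [reflexivity|]. intros j _. rewrite Hhits. reflexivity.
Qed.

Lemma trim_machine_spec sh e p b : (forall i, b i = p i - sh) ->
  machine_fun (trim_machine sh e) p (fun n => e + trim b n).
Proof.
  intros Hb. apply prefix_machine_spec. intros n k Hn. f_equal. apply trim_ext.
  intros i Hi. rewrite word_nth_code, nth_prefix, Hb by lia. reflexivity.
Qed.

(* Answers query [n] with the [n]-th nonzero entry of the input, if already read. *)
Definition minus1_machine m :=
  bsum (fun i => if word_nth i (unpair2 m) =? 0 then 0
                 else if bsum (fun j => if word_nth j (unpair2 m) =? 0 then 0 else 1) i =? unpair1 m
                 then word_nth i (unpair2 m) else 0)
       (word_len (unpair2 m)).

Lemma computable_minus1_machine : computable_pfun (machine_fun minus1_machine).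
Proof. apply computable_machine. unfold minus1_machine. rec_auto. Qed.

Lemma cnt_nz_bsum p i : cnt_nz p i = bsum (fun j => if p j =? 0 then 0 else 1) i.
Proof. induction i; simpl; auto. Qed.

Lemma cnt_nz_mono p i j : i <= j -> cnt_nz p i <= cnt_nz p j.
Proof. induction 1; simpl; lia. Qed.

Lemma cnt_nz_lt p i j : i < j -> p i <> 0 -> cnt_nz p i < cnt_nz p j.
Proof.
  intros Hij Hi. pose proof (cnt_nz_mono p (S i) j Hij). simpl in H.
  rewrite (proj2 (Nat.eqb_neq _ _) Hi) in H. lia.
Qed.

Lemma cnt_nz_inj p i j : p i <> 0 -> p j <> 0 -> cnt_nz p i = cnt_nz p j -> i = j.
Proof.
  intros Hi Hj E. destruct (Nat.lt_trichotomy i j) as [H|[H|H]]; auto;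
    [pose proof (cnt_nz_lt p i j H Hi) | pose proof (cnt_nz_lt p j i H Hj)]; lia.
Qed.

Lemma minus1_machine_spec p q : minus1 p q -> machine_fun minus1_machine p q.
Proof.
  intros Hm. apply machine_fun_eventually. intros n. destruct (Hm n) as [kn [Hnz [Hc Hq]]].
  exists (S kn). intros k.
  unfold minus1_machine. rewrite unpair1_cpair, unpair2_cpair, word_len_code, length_prefix.
  rewrite (bsum_ext _ (fun i => if p i =? 0 then 0 else if cnt_nz p i =? n then p i else 0)).
  - rewrite (bsum_single _ kn).
    + rewrite (proj2 (Nat.eqb_neq _ _) Hnz), Hc, Nat.eqb_refl.
      destruct (Nat.ltb_spec kn k), (Nat.leb_spec (S kn) k); lia.
    + intros i Hi. destruct (Nat.eqb_spec (p i) 0); auto.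
      destruct (Nat.eqb_spec (cnt_nz p i) n); auto.
      exfalso. apply Hi, (cnt_nz_inj p); congruence.
  - intros i Hi. rewrite cnt_nz_bsum, word_nth_code, nth_prefix by auto.
    rewrite (bsum_ext _ (fun j => if p j =? 0 then 0 else 1)); auto.
    intros j Hj. rewrite word_nth_code, nth_prefix by lia. reflexivity.
Qed.

(** * The reductions *)

Lemma avoids_iff b x : avoids b x <-> ~ exists n, in_ball (b n) x.
Proof. unfold avoids. split; [intros H [n Hn]; exact (H n Hn) | intros H i Hi; eauto]. Qed.

Lemma delta_closed_avoids b A x : delta closed_rep b A -> (A x <-> avoids b x).
Proof. intros Hb. rewrite avoids_iff. apply Hb. Qed.

Lemma delta_closed_set b : delta closed_rep b (avoids b).
Proof. intros x. apply avoids_iff. Qed.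

Lemma avoids_trim_inv b x y : avoids b x -> avoids (trim b) y -> avoids b y.
Proof. intros Hx Hy i. rewrite <- (trim_id b x Hx). apply Hy. Qed.

Lemma cnt_nz_S p k : cnt_nz (fun n => S (p n)) k = k.
Proof. induction k; simpl; auto. rewrite IHk. lia. Qed.

Lemma minus1_S p : minus1 (fun n => S (p n)) p.
Proof. intros n. exists n. rewrite cnt_nz_S. repeat split; lia. Qed.

Lemma delta_completion_S (X : rep) p x : delta X p x ->
  delta (completion X) (fun n => S (p n)) (Some x).
Proof. intros H. exists p. split; auto using minus1_S. Qed.

(* Shifting down by one leaves 0 (the empty ball) in place of a gap, so the
   balls [p i - 1] cut out the same set as those of [p - 1]. *)
Lemma minus1_avoids p q x : minus1 p q -> (avoids q x <-> avoids (fun i => p i - 1) x).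
Proof.
  intros Hm. split; intros H i Hi.
  - destruct (Nat.eq_dec (p i) 0) as [E|E]; [rewrite E in Hi; destruct Hi|].
    destruct (Hm (cnt_nz p i)) as [k [Hk [Hc Hq]]].
    rewrite (cnt_nz_inj p k i Hk E Hc) in Hq. apply (H (cnt_nz p i)). rewrite Hq. exact Hi.
  - destruct (Hm i) as [k [_ [_ Hq]]]. apply (H k). rewrite <- Hq. exact Hi.
Qed.

Lemma completion_closed_avoids p A x : delta (completion closed_rep) p (Some A) ->
  (A x <-> avoids (fun i => p i - 1) x).
Proof.
  intros [q [Hm Hq]]. rewrite (delta_closed_avoids q A x Hq). apply minus1_avoids; auto.
Qed.

Lemma C2N_le_pbar : sW_le C2N (pbar C2N).
Proof.
  exists (machine_fun minus1_machine), (machine_fun succ_machine).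
  split; [apply computable_minus1_machine|]. split; [apply computable_succ_machine|].
  intros G _ HG p A Hp [a Ha].
  destruct (HG _ (Some A) (delta_completion_S closed_rep p A Hp)) as [s [Gs [v [Hs Hv]]]].
  { exists (Some a). intros _. exists a. auto. }
  destruct (Hv (ex_intro _ a Ha)) as [y [-> Hy]]. destruct Hs as [r [Hr Hry]].
  exists r. split; [|exists y; auto].
  exists (fun n => S (p n)), s. split; [apply succ_machine_spec|]. split; auto.
  apply minus1_machine_spec; auto.
Qed.

Lemma ptot_le_pbar : sW_le (ptot C2N) (pbar C2N).
Proof.
  exists (machine_fun minus1_machine), (machine_fun (trim_machine 0 1)).
  split; [apply computable_minus1_machine|]. split; [apply computable_trim_machine|].
  intros G _ HG p A Hp _.
  destruct (avoids_trim p) as [x0 Hx0].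
  destruct (HG _ (Some (avoids (trim p))) (delta_completion_S _ _ _ (delta_closed_set (trim p))))
    as [s [Gs [v [Hs Hv]]]].
  { exists (Some x0). intros _. exists x0. split; auto. }
  destruct (Hv (ex_intro _ x0 Hx0)) as [y [-> Hy]]. destruct Hs as [r [Hr Hry]].
  exists r. split.
  - exists (fun n => 1 + trim p n), s. split; [apply trim_machine_spec; lia|].
    split; auto. apply minus1_machine_spec; auto.
  - exists y. split; auto. intros [a Ha]. unfold C2N in *.
    rewrite (delta_closed_avoids p A) in Ha |- * by auto.
    exact (avoids_trim_inv p a y Ha Hy).
Qed.

Lemma pbar_C2N_from_trim p u G s y :
  delta (completion closed_rep) p u ->
  G (trim (fun i => p i - 1)) s -> delta cantor_rep s y -> avoids (trim (fun i => p i - 1)) y ->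
  exists r, compose3 (machine_fun succ_machine) G (machine_fun (trim_machine 1 0)) p r /\
    exists v, delta (completion cantor_rep) r v /\ pbar C2N u v.
Proof.
  intros Hp Gs Hs Hy. exists (fun n => S (s n)). split.
  - exists (trim (fun i => p i - 1)), s.
    split; [exact (trim_machine_spec 1 0 p _ (fun i => eq_refl))|].
    split; auto. apply succ_machine_spec.
  - exists (Some y). split; [apply delta_completion_S; auto|].
    destruct u as [A|]; simpl; auto. intros [a Ha]. exists y. split; auto. unfold C2N in *.
    rewrite (completion_closed_avoids p A) in Ha |- * by auto.
    exact (avoids_trim_inv _ a y Ha Hy).
Qed.

Lemma pbar_le_C2N : sW_le (pbar C2N) C2N.
Proof.
  exists (machine_fun succ_machine), (machine_fun (trim_machine 1 0)).
  split; [apply computable_succ_machine|]. split; [apply computable_trim_machine|].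
  intros G _ HG p u Hp _.
  set (b i := p i - 1). destruct (avoids_trim b) as [x0 Hx0].
  destruct (HG _ _ (delta_closed_set (trim b)) (ex_intro _ x0 Hx0)) as [s [Gs [y [Hs Hy]]]].
  exact (pbar_C2N_from_trim p u G s y Hp Gs Hs Hy).
Qed.

Lemma pbar_le_ptot : sW_le (pbar C2N) (ptot C2N).
Proof.
  exists (machine_fun succ_machine), (machine_fun (trim_machine 1 0)).
  split; [apply computable_succ_machine|]. split; [apply computable_trim_machine|].
  intros G _ HG p u Hp _.
  set (b i := p i - 1). destruct (avoids_trim b) as [x0 Hx0].
  destruct (HG _ _ (delta_closed_set (trim b))) as [s [Gs [y [Hs Hy]]]].
  { exists x0. intros _. exact Hx0. }
  exact (pbar_C2N_from_trim p u G s y Hp Gs Hs (Hy (ex_intro _ x0 Hx0))).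
Qed.

Theorem proposition6p1 :
  sW_equiv C2N (pbar C2N) /\ sW_equiv (pbar C2N) (ptot C2N).
Proof.
  split; split.
  - exact C2N_le_pbar.
  - exact pbar_le_C2N.
  - exact pbar_le_ptot.
  - exact ptot_le_pbar.
Qed.
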